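(* Let $u^h$ be the solutions of the hybrid discrete problem and $u^*,u_*$ their upper and lower half-relaxed limits. Then at every regular point $x\in\Omega_r$, $u_*(x)=u^*(x)=u(x)$, and consequently $u_*$ and $u^*$ are viscosity solutions at $x$ of $\det D^2w=f$ together with $\max(-\lambda_1[w],0)=0$.
   Context: Setting. Let $n\ge 2$, $\Omega=(0,1)^n$, $f\in C(\overline\Omega)$ with $f>0$, and $g\in C(\partial\Omega)$ admitting a convex extension $\tilde g\in C(\overline\Omega)$. Let $u$ be the unique convex viscosity solution of $\det D^2u=f$ in $\Omega$, $u=g$ on $\partial\Omega$. Let $h>0$ with $1/h\in\mathbb Z$, $\mathbb Z_h=\{x\in\mathbb R^n: x_i/h\in\mathbb Z\ \forall i\}$, $\Omega^h=\overline\Omega\cap\mathbb Z_h$, $\Omega^h_0=\Omega\cap\mathbb Z_h$, $\partial\Omega^h=\Omega^h\setminus\Omega^h_0$; $r_h(v)$ is the restriction of a function $v$ to the grid. With $e^i$ the unit vectors, $\partial^i_+v^h(x)=(v^h(x+he^i)-v^h(x))/h$, $\partial^i_-v^h(x)=(v^h(x)-v^h(x-he^i))/h$, $D_hv^h=(\partial^i_+v^h)_i$, $\operatorname{div}_h(v^{h,i})_i=\sum_i\partial^i_-v^{h,i}$, and the discrete Hessian $\mathcal H_dv^h=(\partial^j_-\partial^i_+v^h)_{i,j}$. A point $x\in\Omega$ is regular if $u$ is $C^2$ in a neighborhood of $x$. Let $\Omega_r\subset\Omega$ be an open bounded convex set consisting of regular points. Put $\Omega_r^h=\overline{\Omega_r}\cap\mathbb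 Z_h$, let $\Omega^h_{r,0}$ be the set of $x\in\Omega_r^h$ at which $\mathcal H_dv^h(x)$ is defined using only values at points of $\Omega_r^h$, and $\Omega_s^h=\Omega^h_0\setminus\Omega^h_{r,0}$. Define $M_r[v^h]=\frac1n\operatorname{div}_h[(\operatorname{cof}\operatorname{sym}\mathcal H_dv^h)^TD_hv^h]$. For $x\in\Omega_0^h$ let $W_h(x)$ be the set of orthogonal bases $(\alpha_1,\dots,\alpha_n)$ of $\mathbb R^n$ with $x\pm\alpha_i\in\Omega^h$, and $M_s^+[v^h](x)=\inf_{W_h(x)}\prod_{i=1}^n\max\big(\frac{v^h(x+\alpha_i)-2v^h(x)+v^h(x-\alpha_i)}{|\alpha_i|^2},0\big)$. The hybrid operator is $F_h(v^h)(x)=M_s^+[v^h](x)-f(x)$ on $\Omega_s^h$ and $F_h(v^h)(x)=M_r[v^h](x)-f(x)$ on $\Omega^h_{r,0}$; the hybrid discrete problem is $F_h(u^h)=0$ on $\Omega^h_0$, $u^h=r_h(g)$ on $\partial\Omega^h$, and $u^h$ denotes its solution in $\{v^h: |v^h-r_h(u)|_{1,h}\le C_*h^{2+n/2},\ v^h=r_h(g)\text{ on }\partial\Omega^h,\ v^h=r_h(u)\text{ on }\Omega_r^h\setminus\Omega^h_{r,0}\}$ for a fixed constant $C_*$ and $h$ small, where $|v^h|_{1,h}=(h^n\sum_i\sum_{x\in\Omega^h_{r,0}}(\partial^i_+v^h(x))^2)^{1/2}$. The half-relaxed limits are $u^*(x)=\lim_{\delta\to0}\sup\{u^h(y): y\in\Omega^h_0,|y-x|\le\delta,0<h\le\delta\}$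 and $u_*(x)=\lim_{\delta\to0}\inf\{u^h(y): y\in\Omega^h_0,|y-x|\le\delta,0<h\le\delta\}$. $\lambda_1[w]$ denotes the smallest eigenvalue of the Hessian, understood in the viscosity sense. *)

From Stdlib Require Import Reals Lra ZArith Classical ClassicalEpsilon.
Open Scope R_scope.

(** Points of R^n are represented as [nat -> R]; a point is "canonical"
    when its coordinates of index >= n vanish.  All sets below only contain
    canonical points. *)
Definition pt := nat -> R.

Definition canon (n : nat) (x : pt) : Prop := forall i, (n <= i)%nat -> x i = 0.

Definition vadd (x y : pt) : pt := fun i => x i + y i.
Definition vsub (x y : pt) : pt := fun i => x i - y i.
Definition vscale (t : R) (x : pt) : pt := fun i => t * x i.
Definition e (i : nat) : pt := fun j => if Nat.eqb j i then 1 else 0.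
Definition upd (p : pt) (d : nat) (r : R) : pt := fun i => if Nat.eqb i d then r else p i.

Fixpoint sumn (k : nat) (F : nat -> R) : R :=
  match k with O => 0 | S k' => sumn k' F + F k' end.
Fixpoint prodn (k : nat) (F : nat -> R) : R :=
  match k with O => 1 | S k' => prodn k' F * F k' end.

Definition dot (n : nat) (x y : pt) : R := sumn n (fun i => x i * y i).
Definition distn (n : nat) (x y : pt) : R := sqrt (dot n (vsub x y) (vsub x y)).

Definition minor (A : nat -> nat -> R) (i j : nat) : nat -> nat -> R :=
  fun r c => A (if Nat.ltb r i then r else S r) (if Nat.ltb c j then c else S c).
Fixpoint det (m : nat) (A : nat -> nat -> R) : R :=
  match m with
  | O => 1
  | S m' => sumn (S m') (fun j => (-1) ^ j * A O j * det m' (minor A O j))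
  end.
Definition cofm (n : nat) (A : nat -> nat -> R) : nat -> nat -> R :=
  fun i j => (-1) ^ (i + j) * det (pred n) (minor A i j).
Definition symm (A : nat -> nat -> R) : nat -> nat -> R :=
  fun i j => (A i j + A j i) / 2.

Definition is_eig (n : nat) (A : nat -> nat -> R) (l : R) : Prop :=
  exists v : pt, canon n v /\ (exists i, (i < n)%nat /\ v i <> 0) /\
    forall i, (i < n)%nat -> sumn n (fun j => A i j * v j) = l * v i.
Definition smallest_eig (n : nat) (A : nat -> nat -> R) (l : R) : Prop :=
  is_eig n A l /\ forall l', is_eig n A l' -> l <= l'.

Definition ball (n : nat) (x : pt) (r : R) (y : pt) : Prop := canon n y /\ distn n x y < r.
Definition open_set_n (n : nat) (S : pt -> Prop) : Prop :=
  forall x, S x -> exists r, 0 < r /\ forall y, ball n x r y -> S y.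
Definition bounded_set (n : nat) (S : pt -> Prop) : Prop :=
  exists M, forall x, S x -> forall i, (i < n)%nat -> Rabs (x i) <= M.
Definition convex_set (n : nat) (S : pt -> Prop) : Prop :=
  forall x y t, S x -> S y -> 0 <= t <= 1 -> S (vadd (vscale t x) (vscale (1 - t) y)).
Definition closure (n : nat) (S : pt -> Prop) (x : pt) : Prop :=
  canon n x /\ forall eps, 0 < eps -> exists y, S y /\ distn n x y < eps.
Definition cont_on (n : nat) (S : pt -> Prop) (F : pt -> R) : Prop :=
  forall x, S x -> forall eps, 0 < eps -> exists del, 0 < del /\
    forall y, S y -> distn n x y < del -> Rabs (F y - F x) < eps.
Definition convex_fun_on (n : nat) (S : pt -> Prop) (F : pt -> R) : Prop :=
  forall x y t, S x -> S y -> 0 <= t <= 1 ->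
    F (vadd (vscale t x) (vscale (1 - t) y)) <= t * F x + (1 - t) * F y.

Definition Omega (n : nat) (x : pt) : Prop :=
  canon n x /\ forall i, (i < n)%nat -> 0 < x i < 1.
Definition OmegaBar (n : nat) (x : pt) : Prop :=
  canon n x /\ forall i, (i < n)%nat -> 0 <= x i <= 1.
Definition Bdry (n : nat) (x : pt) : Prop := OmegaBar n x /\ ~ Omega n x.

(** C^2 functions on an open set S: D1 i = d_i F, D2 i j = d_j d_i F,
    all continuous on S *)
Definition C2_data (n : nat) (S : pt -> Prop) (F : pt -> R)
  (D1 : nat -> pt -> R) (D2 : nat -> nat -> pt -> R) : Prop :=
  cont_on n S F /\
  (forall i, (i < n)%nat -> cont_on n S (D1 i)) /\
  (forall i j, (i < n)%nat -> (j < n)%nat -> cont_on n S (D2 i j)) /\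
  forall y, S y -> forall i j, (i < n)%nat -> (j < n)%nat ->
    derivable_pt_lim (fun t => F (vadd y (vscale t (e i)))) 0 (D1 i y) /\
    derivable_pt_lim (fun t => D1 i (vadd y (vscale t (e j)))) 0 (D2 i j y).
Definition C2_hess (n : nat) (S : pt -> Prop) (F : pt -> R)
  (D2 : nat -> nat -> pt -> R) : Prop := exists D1, C2_data n S F D1 D2.
Definition C2_on (n : nat) (S : pt -> Prop) (F : pt -> R) : Prop :=
  exists D1 D2, C2_data n S F D1 D2.

Definition regular (n : nat) (u : pt -> R) (x : pt) : Prop :=
  exists r, 0 < r /\ C2_on n (ball n x r) u.

(** convex viscosity solution of det D^2 u = f in Omega (Gutierrez' definition,
    convex C^2 test functions) *)
Definition visc_MA (n : nat) (f u : pt -> R) : Prop :=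
  forall x0 r phi D2, Omega n x0 -> 0 < r ->
    C2_hess n (ball n x0 r) phi D2 -> convex_fun_on n (ball n x0 r) phi ->
    ((forall y, ball n x0 r y -> Omega n y -> u y - phi y <= u x0 - phi x0) ->
       f x0 <= det n (fun i j => D2 i j x0)) /\
    ((forall y, ball n x0 r y -> Omega n y -> u x0 - phi x0 <= u y - phi y) ->
       det n (fun i j => D2 i j x0) <= f x0).

Inductive ER : Type := ER_fin (r : R) | ER_pinf | ER_minf.
Definition ER_le (a b : ER) : Prop :=
  match a, b with
  | ER_minf, _ => True
  | _, ER_pinf => True
  | ER_fin x, ER_fin y => x <= y
  | _, _ => False
  end.
Definition ER_opp (a : ER) : ER :=
  match a with ER_fin x => ER_fin (- x) | ER_pinf => ER_minf | ER_minf => ER_pinf end.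

Definition ER_sup (E : ER -> Prop) : ER :=
  match excluded_middle_informative (E ER_pinf) with
  | left _ => ER_pinf
  | right _ =>
    match excluded_middle_informative (exists r, E (ER_fin r)) with
    | right _ => ER_minf
    | left ne =>
      match excluded_middle_informative (bound (fun r => E (ER_fin r))) with
      | left b => ER_fin (proj1_sig (completeness (fun r => E (ER_fin r)) b ne))
      | right _ => ER_pinf
      end
    end
  end.
Definition ER_inf (E : ER -> Prop) : ER := ER_opp (ER_sup (fun y => E (ER_opp y))).

Definition visc_MA_at (n : nat) (f : pt -> R) (w : pt -> ER) (x : pt) : Prop :=
  forall a r phi D2, w x = ER_fin a -> 0 < r ->
    C2_hess n (ball n x r) phi D2 -> convex_fun_on n (ball n x r) phi ->
    ((forall y, ball n x r y -> Omega n y -> ER_le (w y) (ER_fin (phi y + (a - phi x)))) ->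
       f x <= det n (fun i j => D2 i j x)) /\
    ((forall y, ball n x r y -> Omega n y -> ER_le (ER_fin (phi y + (a - phi x))) (w y)) ->
       det n (fun i j => D2 i j x) <= f x).

Definition visc_lam_at (n : nat) (w : pt -> ER) (x : pt) : Prop :=
  forall a r phi D2, w x = ER_fin a -> 0 < r -> C2_hess n (ball n x r) phi D2 ->
    ((forall y, ball n x r y -> Omega n y -> ER_le (w y) (ER_fin (phi y + (a - phi x)))) ->
       forall l, smallest_eig n (fun i j => D2 i j x) l -> Rmax (- l) 0 <= 0) /\
    ((forall y, ball n x r y -> Omega n y -> ER_le (ER_fin (phi y + (a - phi x))) (w y)) ->
       forall l, smallest_eig n (fun i j => D2 i j x) l -> 0 <= Rmax (- l) 0).

Definition hN (N : nat) : R := / INR N.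
Definition on_grid (n N : nat) (x : pt) : Prop :=
  canon n x /\ forall i, (i < n)%nat -> exists z : Z, x i = IZR z * hN N.
Definition OmegaH (n N : nat) (x : pt) : Prop := OmegaBar n x /\ on_grid n N x.
Definition OmegaH0 (n N : nat) (x : pt) : Prop := Omega n x /\ on_grid n N x.
Definition BdryH (n N : nat) (x : pt) : Prop := OmegaH n N x /\ ~ OmegaH0 n N x.

Definition OmegaHr (n N : nat) (Omr : pt -> Prop) (x : pt) : Prop :=
  closure n Omr x /\ on_grid n N x.
(** points where the discrete Hessian uses only values at points of OmegaHr *)
Definition OmegaHr0 (n N : nat) (Omr : pt -> Prop) (x : pt) : Prop :=
  OmegaHr n N Omr x /\
  forall i j, (i < n)%nat -> (j < n)%nat ->
    OmegaHr n N Omr (vadd x (vscale (hN N) (e i))) /\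
    OmegaHr n N Omr (vsub x (vscale (hN N) (e j))) /\
    OmegaHr n N Omr (vsub (vadd x (vscale (hN N) (e i))) (vscale (hN N) (e j))).

Definition dplus (N i : nat) (v : pt -> R) (x : pt) : R :=
  (v (vadd x (vscale (hN N) (e i))) - v x) / hN N.
Definition dminus (N i : nat) (v : pt -> R) (x : pt) : R :=
  (v x - v (vsub x (vscale (hN N) (e i)))) / hN N.
Definition Hd (N : nat) (v : pt -> R) (x : pt) : nat -> nat -> R :=
  fun i j => dminus N j (fun y => dplus N i v y) x.
Definition Wfield (n N : nat) (v : pt -> R) (y : pt) (i : nat) : R :=
  sumn n (fun k => cofm n (symm (Hd N v y)) k i * dplus N k v y).
Definition Mr (n N : nat) (v : pt -> R) (x : pt) : R :=
  / INR n * sumn n (fun i => dminus N i (fun y => Wfield n N v y i) x).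

Definition orth_basis (n : nat) (al : nat -> pt) : Prop :=
  (forall k, (k < n)%nat -> canon n (al k)) /\
  (forall c : nat -> R,
     (forall i, (i < n)%nat -> sumn n (fun k => c k * al k i) = 0) ->
     forall k, (k < n)%nat -> c k = 0) /\
  (forall v, canon n v -> exists c : nat -> R,
     forall i, (i < n)%nat -> v i = sumn n (fun k => c k * al k i)) /\
  (forall k l, (k < n)%nat -> (l < n)%nat -> k <> l -> dot n (al k) (al l) = 0).
Definition Wh (n N : nat) (x : pt) (al : nat -> pt) : Prop :=
  orth_basis n al /\
  forall k, (k < n)%nat -> OmegaH n N (vadd x (al k)) /\ OmegaH n N (vsub x (al k)).
Definition Msval (n : nat) (v : pt -> R) (x : pt) (al : nat -> pt) : R :=
  prodn n (fun k => Rmax ((v (vadd x (al k)) - 2 * v x + v (vsub x (al k)))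
                          / dot n (al k) (al k)) 0).
Definition is_inf (E : R -> Prop) (m : R) : Prop :=
  (forall y, E y -> m <= y) /\ (forall m', (forall y, E y -> m' <= y) -> m' <= m).
Definition Ms_is (n N : nat) (v : pt -> R) (x : pt) (m : R) : Prop :=
  is_inf (fun p => exists al, Wh n N x al /\ p = Msval n v x al) m.

(** sum of F over the grid points {0, h, ..., 1}^n *)
Fixpoint gsum (N d : nat) (F : pt -> R) : R :=
  match d with
  | O => F (fun _ => 0)
  | S d' => sumn (S N) (fun k => gsum N d' (fun p => F (upd p d' (INR k / INR N))))
  end.
Definition indic (P : Prop) : R := if excluded_middle_informative P then 1 else 0.
Definition norm1h (n N : nat) (Omr : pt -> Prop) (v : pt -> R) : R :=
  sqrt (hN N ^ n * sumn n (fun i =>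
     gsum N n (fun x => indic (OmegaHr0 n N Omr x) * (dplus N i v x) ^ 2))).

Definition hybrid_sol (n : nat) (f g u : pt -> R) (Omr : pt -> Prop) (Cs : R)
  (N : nat) (v : pt -> R) : Prop :=
  (forall x, OmegaH0 n N x ->
     (OmegaHr0 n N Omr x -> Mr n N v x = f x) /\
     (~ OmegaHr0 n N Omr x -> Ms_is n N v x (f x))) /\
  (forall x, BdryH n N x -> v x = g x) /\
  norm1h n N Omr (fun y => v y - u y) <= Cs * Rpower (hN N) (2 + INR n / 2) /\
  (forall x, OmegaHr n N Omr x -> ~ OmegaHr0 n N Omr x -> v x = u x).

(** half-relaxed limits; U N is u^h with h = 1/N *)
Definition hr_set (n : nat) (U : nat -> pt -> R) (x : pt) (del : R) (s : ER) : Prop :=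
  exists N y, (1 <= N)%nat /\ hN N <= del /\ OmegaH0 n N y /\ distn n y x <= del /\
    s = ER_fin (U N y).
(** lim_{del -> 0} of a quantity monotone in del = its inf (resp. sup) over del > 0 *)
Definition ustar_up (n : nat) (U : nat -> pt -> R) (x : pt) : ER :=
  ER_inf (fun s => exists del, 0 < del /\ s = ER_sup (hr_set n U x del)).
Definition ustar_low (n : nat) (U : nat -> pt -> R) (x : pt) : ER :=
  ER_sup (fun s => exists del, 0 < del /\ s = ER_inf (hr_set n U x del)).

(* Let w = u^h - u.  On a grid point of Omega^h_{r,0} a single forward difference of w
   is controlled by the discrete H^1 seminorm times h^(-n/2), hence by C_* h^2.  Walking
   from a grid point of closure(Omega_r) in direction e_1 leaves Omega^h_{r,0} within
   1/h + 1 steps, at a point where u^h = u; summing the increments gives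
   |u^h - u| <= 2 C_* h on Omega^h_r.  So u^h -> u uniformly near every regular point,
   both half-relaxed limits equal u on Omega_r, and they inherit the viscosity property
   of u for det D^2 w = f.  For max(-lambda_1[w], 0) = 0 only the subsolution inequality
   has content: if a C^2 function touches the convex u from above, its second difference
   along an eigenvector is nonnegative, so the eigenvalue is nonnegative. *)

From Stdlib Require Import Reals ZArith Classical ClassicalEpsilon.
From Stdlib Require Import Lra Lia FunctionalExtensionality PropExtensionality.
Open Scope R_scope.

Lemma sumn_ext k F G : (forall i, (i < k)%nat -> F i = G i) -> sumn k F = sumn k G.
Proof.
  induction k; simpl; intros H; [reflexivity|].
  rewrite IHk by (intros; apply H; lia). now rewrite H by lia.
Qed.

Lemma sumn_le k F G : (forall i, (i < k)%nat -> F i <= G i) -> sumn k F <= sumn k G.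
Proof.
  induction k; simpl; intros H; [lra|].
  pose proof (H k ltac:(lia)). pose proof (IHk ltac:(intros; apply H; lia)). lra.
Qed.

Lemma sumn_const k c : sumn k (fun _ => c) = INR k * c.
Proof. induction k; simpl sumn; [simpl; lra|]. rewrite IHk, S_INR. lra. Qed.

Lemma sumn_nonneg k F : (forall i, (i < k)%nat -> 0 <= F i) -> 0 <= sumn k F.
Proof.
  intros H. rewrite <- (Rmult_0_r (INR k)), <- sumn_const. now apply sumn_le.
Qed.

Lemma sumn_le_term k F i : (forall j, (j < k)%nat -> 0 <= F j) -> (i < k)%nat -> F i <= sumn k F.
Proof.
  induction k; simpl; intros H Hi; [lia|].
  destruct (Nat.eq_dec i k) as [->|Hne].
  - pose proof (sumn_nonneg k F ltac:(intros; apply H; lia)). lra.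
  - pose proof (IHk ltac:(intros; apply H; lia) ltac:(lia)). pose proof (H k ltac:(lia)). lra.
Qed.

Lemma sumn_scal k c F : sumn k (fun i => c * F i) = c * sumn k F.
Proof. induction k; simpl; [lra|]. rewrite IHk. lra. Qed.

Lemma small_mult_exists a b : 0 <= a -> 0 < b ->
  exists d, 0 < d /\ forall t, Rabs t < d -> Rabs t * a < b.
Proof.
  intros Ha Hb. exists (b / (a + 1)). split; [apply Rdiv_lt_0_compat; lra|].
  intros t Ht. pose proof (Rabs_pos t).
  apply (Rmult_lt_compat_r (a + 1)) in Ht; [|lra].
  replace (b / (a + 1) * (a + 1)) with b in Ht by (field; lra). nra.
Qed.

Lemma coord_bound_exists n (v : pt) : exists V, 0 < V /\ forall i, (i < n)%nat -> Rabs (v i) <= V.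
Proof.
  exists (sumn n (fun i => Rabs (v i)) + 1).
  pose proof (sumn_nonneg n (fun i => Rabs (v i)) ltac:(intros; apply Rabs_pos)).
  split; [lra|]. intros i Hi.
  pose proof (sumn_le_term n (fun i => Rabs (v i)) i ltac:(intros; apply Rabs_pos) Hi). lra.
Qed.

Lemma vadd_zero y : vadd y (fun _ => 0) = y.
Proof. apply functional_extensionality. intros; unfold vadd; ring. Qed.

Lemma vadd_scale0 y v : vadd y (vscale 0 v) = y.
Proof. apply functional_extensionality. intros; unfold vadd, vscale; ring. Qed.

Lemma vadd_assoc x a q : vadd (vadd x a) q = vadd x (vadd a q).
Proof. apply functional_extensionality; intros i; unfold vadd; ring. Qed.

Lemma canon_zero n : canon n (fun _ => 0).
Proof. intros i _; reflexivity. Qed.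

Lemma e_neq k i : i <> k -> e k i = 0.
Proof. intros H. unfold e. destruct (Nat.eqb_spec i k); [lia|reflexivity]. Qed.

Lemma e_diag k : e k k = 1.
Proof. unfold e. now rewrite Nat.eqb_refl. Qed.

Lemma dot_self_nonneg n w : 0 <= dot n w w.
Proof. apply sumn_nonneg. intros. nra. Qed.

Lemma coord_le_distn n x y i : (i < n)%nat -> Rabs (x i - y i) <= distn n x y.
Proof.
  intros Hi. unfold distn. rewrite <- sqrt_Rsqr_abs.
  apply sqrt_le_1; [apply Rle_0_sqr|apply dot_self_nonneg|].
  apply (sumn_le_term n (fun i => vsub x y i * vsub x y i) i); [intros; nra|exact Hi].
Qed.

Lemma distn_le_coords n a b c : 0 <= c -> (forall i, (i < n)%nat -> Rabs (a i - b i) <= c) ->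
  distn n a b <= INR n * c.
Proof.
  intros Hc H. unfold distn. pose proof (pos_INR n) as Hn.
  assert (Hd : dot n (vsub a b) (vsub a b) <= INR n * (c * c)).
  { rewrite <- sumn_const. apply sumn_le. intros i Hi. unfold vsub.
    pose proof (H i Hi). pose proof (Rabs_pos (a i - b i)).
    pose proof (Rsqr_abs (a i - b i)) as E. unfold Rsqr in E. nra. }
  rewrite <- (sqrt_square (INR n * c)) by nra.
  apply sqrt_le_1; [apply dot_self_nonneg|nra|].
  destruct n; [simpl in *; nra|].
  assert (1 <= INR (S n)) by (rewrite S_INR; pose proof (pos_INR n); lra).
  assert (0 <= c * c) by nra. nra.
Qed.

Lemma distn_sym n x y : distn n x y = distn n y x.
Proof. unfold distn, dot. f_equal. apply sumn_ext. intros. unfold vsub. ring. Qed.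

Lemma distn_refl n x : distn n x x = 0.
Proof.
  unfold distn, dot. rewrite (sumn_ext n _ (fun _ => 0)), sumn_const, Rmult_0_r; [apply sqrt_0|].
  intros. unfold vsub. ring.
Qed.

Lemma distn_vadd_le n y q c : 0 <= c -> (forall i, (i < n)%nat -> Rabs (q i) <= c) ->
  distn n y (vadd y q) <= INR n * c.
Proof.
  intros Hc H. apply distn_le_coords; auto. intros i Hi. unfold vadd.
  replace (y i - (y i + q i)) with (- q i) by ring. rewrite Rabs_Ropp. auto.
Qed.

Lemma ball_le n x r r' y : r <= r' -> ball n x r y -> ball n x r' y.
Proof. intros H [H1 H2]. split; [exact H1|lra]. Qed.

Lemma ball_vadd n x q c r : canon n x -> canon n q -> 0 <= c ->
  (forall i, (i < n)%nat -> Rabs (q i) <= c) -> INR n * c < r -> ball n x r (vadd x q).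
Proof.
  intros Hx Hq Hc H Hr. split.
  - intros i Hi. unfold vadd. rewrite Hx, Hq by auto. ring.
  - eapply Rle_lt_trans; [apply distn_vadd_le|]; eauto.
Qed.

Lemma ER_opp_involutive a : ER_opp (ER_opp a) = a.
Proof. destruct a; simpl; try rewrite Ropp_involutive; reflexivity. Qed.

Lemma ER_opp_eq_iff a b : ER_opp a = b <-> a = ER_opp b.
Proof. split; [intros <-|intros ->]; now rewrite ER_opp_involutive. Qed.

Lemma ER_sup_ub E s r : ER_sup E = ER_fin s -> E (ER_fin r) -> r <= s.
Proof.
  unfold ER_sup. intros H Hr.
  destruct (excluded_middle_informative (E ER_pinf)); [discriminate|].
  destruct (excluded_middle_informative (exists r, E (ER_fin r))) as [ne|]; [|discriminate].
  destruct (excluded_middle_informative (bound (fun r => E (ER_fin r)))) as [b|]; [|discriminate].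
  destruct (completeness _ b ne) as [l [Hl Hl2]]. simpl in H. injection H as ->. now apply Hl.
Qed.

Lemma ER_sup_not_minf E r : E (ER_fin r) -> ER_sup E <> ER_minf.
Proof.
  unfold ER_sup. intros Hr.
  destruct (excluded_middle_informative (E ER_pinf)); [discriminate|].
  destruct (excluded_middle_informative (exists r, E (ER_fin r))); [|exfalso; eauto].
  destruct (excluded_middle_informative (bound (fun r => E (ER_fin r)))); discriminate.
Qed.

Lemma ER_sup_fin_le E r0 M : ~ E ER_pinf -> E (ER_fin r0) -> (forall r, E (ER_fin r) -> r <= M) ->
  exists s, ER_sup E = ER_fin s /\ s <= M.
Proof.
  unfold ER_sup. intros Hp Hr0 HM.
  destruct (excluded_middle_informative (E ER_pinf)); [tauto|].
  destruct (excluded_middle_informative (exists r, E (ER_fin r))) as [ne|]; [|exfalso; eauto].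
  destruct (excluded_middle_informative (bound (fun r => E (ER_fin r)))) as [b|nb].
  - destruct (completeness _ b ne) as [l [Hl1 Hl]]. exists l. split; [reflexivity|]. now apply Hl.
  - exfalso. apply nb. now exists M.
Qed.

Lemma ER_sup_eq_fin E L : ~ E ER_pinf -> (forall r, E (ER_fin r) -> r <= L) ->
  (forall eps, 0 < eps -> exists r, E (ER_fin r) /\ L - eps < r) -> ER_sup E = ER_fin L.
Proof.
  intros Hp Hub Hnear. unfold ER_sup.
  destruct (excluded_middle_informative (E ER_pinf)); [tauto|].
  destruct (excluded_middle_informative (exists r, E (ER_fin r))) as [ne|ne].
  2:{ exfalso. destruct (Hnear 1 Rlt_0_1) as [r [Hr _]]. eauto. }
  destruct (excluded_middle_informative (bound (fun r => E (ER_fin r)))) as [b|nb].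
  2:{ exfalso. apply nb. now exists L. }
  destruct (completeness _ b ne) as [l [Hl1 Hl2]]. simpl. f_equal.
  apply Rle_antisym; [now apply Hl2|].
  apply Rnot_lt_le. intros Hlt. destruct (Hnear (L - l) ltac:(lra)) as [r [Hr Hr']].
  pose proof (Hl1 r Hr). lra.
Qed.

Lemma ER_inf_eq_fin E L : ~ E ER_minf -> (forall r, E (ER_fin r) -> L <= r) ->
  (forall eps, 0 < eps -> exists r, E (ER_fin r) /\ r < L + eps) -> ER_inf E = ER_fin L.
Proof.
  intros Hm Hlb Hnear. unfold ER_inf. rewrite (ER_sup_eq_fin _ (- L)).
  - simpl. now rewrite Ropp_involutive.
  - exact Hm.
  - intros r Hr. pose proof (Hlb (- r) Hr). lra.
  - intros eps He. destruct (Hnear eps He) as [r [Hr Hr']]. exists (- r).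
    simpl. rewrite Ropp_involutive. split; [exact Hr|lra].
Qed.

Lemma ER_limsup_eq (A : R -> ER -> Prop) L :
  (forall d s, A d s -> exists r, s = ER_fin r) ->
  (forall d, 0 < d -> forall eps, 0 < eps -> exists r, A d (ER_fin r) /\ Rabs (r - L) < eps) ->
  (forall eps, 0 < eps -> exists d0, 0 < d0 /\ forall d, 0 < d -> d <= d0 ->
      forall r, A d (ER_fin r) -> Rabs (r - L) < eps) ->
  ER_inf (fun s => exists d, 0 < d /\ s = ER_sup (A d)) = ER_fin L.
Proof.
  intros Hfin Hdense Hunif. apply ER_inf_eq_fin.
  - intros [d [Hd E]]. destruct (Hdense d Hd 1 Rlt_0_1) as [r [Hr _]].
    exact (ER_sup_not_minf _ _ Hr (eq_sym E)).
  - intros r [d [Hd E]]. apply Rnot_lt_le. intros Hlt.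
    destruct (Hdense d Hd (L - r) ltac:(lra)) as [r' [Hr' Habs]].
    pose proof (ER_sup_ub _ _ _ (eq_sym E) Hr'). apply Rabs_def2 in Habs. lra.
  - intros eps He. destruct (Hunif (eps / 2) ltac:(lra)) as [d0 [Hd0 Hclose]].
    destruct (Hdense d0 Hd0 1 Rlt_0_1) as [r0 [Hr0 _]].
    destruct (ER_sup_fin_le (A d0) r0 (L + eps / 2)) as [s [Hs Hsle]]; [|exact Hr0| |].
    + intros Hp. destruct (Hfin _ _ Hp). discriminate.
    + intros r Hr. pose proof (Hclose d0 Hd0 (Rle_refl _) r Hr) as Habs.
      apply Rabs_def2 in Habs. lra.
    + exists s. split; [exists d0; auto|lra].
Qed.

Lemma ER_liminf_eq (A : R -> ER -> Prop) L :
  (forall d s, A d s -> exists r, s = ER_fin r) ->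
  (forall d, 0 < d -> forall eps, 0 < eps -> exists r, A d (ER_fin r) /\ Rabs (r - L) < eps) ->
  (forall eps, 0 < eps -> exists d0, 0 < d0 /\ forall d, 0 < d -> d <= d0 ->
      forall r, A d (ER_fin r) -> Rabs (r - L) < eps) ->
  ER_sup (fun s => exists d, 0 < d /\ s = ER_inf (A d)) = ER_fin L.
Proof.
  intros Hfin Hdense Hunif.
  set (B := fun d y => A d (ER_opp y)).
  assert (Habs_opp : forall r, Rabs (- r - - L) = Rabs (r - L)).
  { intros r. rewrite <- Rabs_Ropp. f_equal. ring. }
  assert (HB : ER_inf (fun s => exists d, 0 < d /\ s = ER_sup (B d)) = ER_fin (- L)).
  { apply ER_limsup_eq.
    - intros d s Hs. destruct (Hfin _ _ Hs) as [r Hr]. exists (- r).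
      apply ER_opp_eq_iff in Hr. exact Hr.
    - intros d Hd eps He. destruct (Hdense d Hd eps He) as [r [Hr Hr']]. exists (- r).
      unfold B. simpl. rewrite Ropp_involutive, Habs_opp. auto.
    - intros eps He. destruct (Hunif eps He) as [d0 [Hd0 Hclose]]. exists d0. split; [exact Hd0|].
      intros d Hd Hdd r Hr. rewrite <- (Ropp_involutive r), Habs_opp. exact (Hclose d Hd Hdd (- r) Hr). }
  unfold ER_inf in HB. apply ER_opp_eq_iff in HB. simpl in HB.
  rewrite Ropp_involutive in HB. rewrite <- HB. f_equal.
  apply functional_extensionality. intros y. apply propositional_extensionality.
  unfold ER_inf. fold (B). split; intros [d [Hd E]]; exists d; split; auto.
  - now apply ER_opp_eq_iff.
  - now apply ER_opp_eq_iff in E.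
Qed.

Lemma one_le_INR N : (1 <= N)%nat -> 1 <= INR N.
Proof. intros. now apply (le_INR 1). Qed.

Lemma hN_pos N : (1 <= N)%nat -> 0 < hN N.
Proof. intros HN. apply Rinv_0_lt_compat. pose proof (one_le_INR N HN). lra. Qed.

Lemma hN_le_1 N : (1 <= N)%nat -> hN N <= 1.
Proof.
  intros HN. unfold hN. rewrite <- Rinv_1.
  apply Rinv_le_contravar; [lra|now apply one_le_INR].
Qed.

Lemma S_INR_hN N : (1 <= N)%nat -> INR (S N) * hN N = 1 + hN N.
Proof. intros HN. unfold hN. rewrite S_INR. pose proof (one_le_INR N HN). field. lra. Qed.

Lemma closure_Omega_coord n S z : (forall w, S w -> Omega n w) -> closure n S z ->
  forall i, (i < n)%nat -> 0 <= z i <= 1.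
Proof.
  intros HO [_ Hcl] i Hi.
  assert (Hnear : forall eps, 0 < eps -> exists w, Omega n w /\ Rabs (z i - w i) < eps).
  { intros eps He. destruct (Hcl eps He) as [w [Hw Hd]]. exists w. split; [now apply HO|].
    eapply Rle_lt_trans; [apply coord_le_distn|]; eauto. }
  split; apply Rnot_lt_le; intros Hlt.
  - destruct (Hnear (- z i) ltac:(lra)) as [w [[_ Hw] Hd]].
    specialize (Hw i Hi). apply Rabs_def2 in Hd. lra.
  - destruct (Hnear (z i - 1) ltac:(lra)) as [w [[_ Hw] Hd]].
    specialize (Hw i Hi). apply Rabs_def2 in Hd. lra.
Qed.

Lemma grid_coord_frac n N z i : (1 <= N)%nat -> on_grid n N z -> (i < n)%nat -> 0 <= z i <= 1 ->
  exists k, (k <= N)%nat /\ z i = INR k / INR N.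
Proof.
  intros HN [_ Hg] Hi Hz. destruct (Hg i Hi) as [m Hm]. unfold hN in Hm.
  pose proof (one_le_INR N HN).
  assert (Hmz : 0 <= IZR m <= INR N).
  { rewrite Hm in Hz. destruct Hz as [Hz0 Hz1].
    apply Rmult_le_compat_r with (r := INR N) in Hz0, Hz1; [|lra|lra].
    field_simplify in Hz0. field_simplify in Hz1. lra. lra. lra. }
  rewrite INR_IZR_INZ in Hmz. destruct Hmz as [H0 H1]. apply le_IZR in H0, H1.
  exists (Z.to_nat m). split; [lia|].
  rewrite Hm, (INR_IZR_INZ (Z.to_nat m)), Z2Nat.id by exact H0. reflexivity.
Qed.

Lemma gsum_nonneg N d F : (forall p, 0 <= F p) -> 0 <= gsum N d F.
Proof.
  revert F; induction d; intros F H; [apply H|].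
  apply sumn_nonneg. intros. apply IHd. auto.
Qed.

Lemma gsum_le_term N d F : (forall p, 0 <= F p) -> forall z, (forall i, (d <= i)%nat -> z i = 0) ->
  (forall i, (i < d)%nat -> exists k, (k <= N)%nat /\ z i = INR k / INR N) -> F z <= gsum N d F.
Proof.
  revert F; induction d; intros F HF z Hz Hk.
  - simpl. replace (fun _ : nat => 0) with z; [lra|].
    apply functional_extensionality. intros; apply Hz; lia.
  - destruct (Hk d ltac:(lia)) as [k0 [Hk0 Hzk]].
    eapply Rle_trans;
      [|apply (sumn_le_term (S N) (fun k => gsum N d (fun p => F (upd p d (INR k / INR N)))) k0);
         [intros; now apply gsum_nonneg|lia]].
    eapply Rle_trans; [|apply (IHd (fun p => F (upd p d (INR k0 / INR N)))) with (z := upd z d 0)];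
      [|auto| |].
    + right. f_equal. apply functional_extensionality. intros i. unfold upd.
      destruct (Nat.eqb_spec i d); subst; auto.
    + intros i Hi. unfold upd. destruct (Nat.eqb_spec i d); auto. apply Hz. lia.
    + intros i Hi. unfold upd. destruct (Nat.eqb_spec i d); [lia|]. apply Hk. lia.
Qed.

Lemma dplus_sq_le_gsum n N Omr v z i : (1 <= N)%nat -> (forall w, Omr w -> Omega n w) ->
  OmegaHr0 n N Omr z -> (i < n)%nat ->
  dplus N i v z ^ 2 <=
    sumn n (fun k => gsum N n (fun x => indic (OmegaHr0 n N Omr x) * dplus N k v x ^ 2)).
Proof.
  intros HN HO Hz Hi.
  set (G := fun k x => indic (OmegaHr0 n N Omr x) * dplus N k v x ^ 2).
  assert (HG : forall k x, 0 <= G k x).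
  { intros. unfold G, indic. destruct (excluded_middle_informative _); nra. }
  replace (dplus N i v z ^ 2) with (G i z).
  2:{ unfold G, indic. destruct (excluded_middle_informative _); [ring|tauto]. }
  eapply Rle_trans; [|apply (sumn_le_term n (fun k => gsum N n (G k)) i);
                       [intros; now apply gsum_nonneg|exact Hi]].
  destruct Hz as [[Hcl Hg] _].
  apply gsum_le_term; [auto|apply Hcl|].
  intros j Hj. apply (grid_coord_frac n N z j); auto.
  now apply (closure_Omega_coord n Omr).
Qed.

Lemma Rpower_sq_pow h n : 0 < h ->
  Rpower h (2 + INR n / 2) * Rpower h (2 + INR n / 2) = h ^ 4 * h ^ n.
Proof.
  intros Hh. rewrite <- Rpower_plus, <- pow_add, <- Rpower_pow by exact Hh.
  f_equal. rewrite plus_INR. simpl. field.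
Qed.

Lemma dplus_le_norm1h n N Omr v C z i : (1 <= N)%nat -> (forall w, Omr w -> Omega n w) ->
  norm1h n N Omr v <= C * Rpower (hN N) (2 + INR n / 2) ->
  OmegaHr0 n N Omr z -> (i < n)%nat -> Rabs (dplus N i v z) <= Rabs C * hN N ^ 2.
Proof.
  intros HN HO Hnorm Hz Hi. unfold norm1h in Hnorm.
  pose proof (dplus_sq_le_gsum n N Omr v z i HN HO Hz Hi) as Hterm.
  set (h := hN N) in *. assert (Hh : 0 < h) by now apply hN_pos.
  set (S := sumn n _) in Hnorm, Hterm.
  assert (HS : 0 <= S) by (apply sumn_nonneg; intros; apply gsum_nonneg;
                             intros; unfold indic; destruct (excluded_middle_informative _); nra).
  assert (Hhn : 0 < h ^ n) by (apply pow_lt; exact Hh).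
  assert (Hsq : h ^ n * S <= C * C * (h ^ 4 * h ^ n)).
  { rewrite <- (Rpower_sq_pow h n Hh). pose proof (sqrt_pos (h ^ n * S)).
    rewrite <- (sqrt_sqrt (h ^ n * S)) by nra. nra. }
  assert (HS4 : S <= C * C * h ^ 4) by (apply Rmult_le_reg_l with (h ^ n); nra).
  replace (Rabs C * h ^ 2) with (Rabs (C * h ^ 2))
    by (rewrite Rabs_mult, (Rabs_right (h ^ 2)) by (apply Rle_ge, pow_le; lra); ring).
  apply Rsqr_le_abs_0. unfold Rsqr. simpl in *. nra.
Qed.

Section GridWalk.
Variables (n N : nat) (Omr : pt -> Prop) (w : pt -> R) (K : R).
Hypothesis Hn : (1 <= n)%nat.
Hypothesis HN : (1 <= N)%nat.
Hypothesis HO : forall z, Omr z -> Omega n z.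
Hypothesis HK : 0 <= K.
Hypothesis Hstep : forall z, OmegaHr0 n N Omr z -> Rabs (dplus N 0 w z) <= K.
Hypothesis Hedge : forall z, OmegaHr n N Omr z -> ~ OmegaHr0 n N Omr z -> w z = 0.

Fixpoint walk_pt (y : pt) (k : nat) : pt :=
  match k with O => y | S k' => vadd (walk_pt y k') (vscale (hN N) (e 0)) end.

Lemma walk_pt_0 y k : walk_pt y k 0%nat = y 0%nat + INR k * hN N.
Proof.
  induction k; simpl walk_pt; [simpl; ring|].
  unfold vadd, vscale. rewrite IHk, e_diag, S_INR. ring.
Qed.

Lemma walk_bound y : 0 <= y 0%nat -> forall m k, (k + m = S N)%nat ->
  OmegaHr n N Omr (walk_pt y k) -> Rabs (w (walk_pt y k)) <= INR m * (K * hN N).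
Proof.
  intros Hy0. pose proof (hN_pos N HN) as Hh.
  induction m; intros k Hk Hz.
  - exfalso. replace k with (S N) in * by lia.
    destruct Hz as [Hcl _]. pose proof (closure_Omega_coord n Omr _ HO Hcl 0 ltac:(lia)).
    rewrite walk_pt_0, S_INR_hN in H by exact HN. lra.
  - destruct (classic (OmegaHr0 n N Omr (walk_pt y k))) as [H0|H0].
    + assert (Hnext : OmegaHr n N Omr (walk_pt y (S k)))
        by (destruct H0 as [_ H0]; apply (H0 0%nat 0%nat); lia).
      specialize (IHm (S k) ltac:(lia) Hnext).
      assert (Hinc : Rabs (w (walk_pt y (S k)) - w (walk_pt y k)) <= K * hN N).
      { pose proof (Hstep _ H0) as Hd. unfold dplus in Hd.
        change (vadd (walk_pt y k) (vscale (hN N) (e 0))) with (walk_pt y (S k)) in Hd.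
        replace (w (walk_pt y (S k)) - w (walk_pt y k))
          with ((w (walk_pt y (S k)) - w (walk_pt y k)) / hN N * hN N) by (field; lra).
        rewrite Rabs_mult, (Rabs_right (hN N)) by lra. apply Rmult_le_compat_r; lra. }
      pose proof (Rabs_triang_inv (w (walk_pt y k)) (w (walk_pt y (S k)))).
      rewrite <- Rabs_Ropp, Ropp_minus_distr in Hinc. rewrite S_INR. lra.
    + rewrite Hedge, Rabs_R0 by assumption.
      apply Rmult_le_pos; [apply pos_INR|nra].
Qed.

Lemma grid_walk_bound y : OmegaHr n N Omr y -> Rabs (w y) <= INR (S N) * (K * hN N).
Proof.
  intros Hy. apply (walk_bound y) with (k := 0%nat); [|lia|exact Hy].
  destruct Hy as [Hcl _]. apply (closure_Omega_coord n Omr y HO Hcl 0). lia.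
Qed.
End GridWalk.

Lemma hybrid_sol_grid_err n f g u Omr Cs N v : (1 <= n)%nat -> (1 <= N)%nat ->
  (forall z, Omr z -> Omega n z) -> hybrid_sol n f g u Omr Cs N v ->
  forall y, OmegaHr n N Omr y -> Rabs (v y - u y) <= 2 * Rabs Cs * hN N.
Proof.
  intros Hn HN HO [_ [_ [Hnorm Hedge]]] y Hy.
  pose proof (hN_pos N HN) as Hh. pose proof (hN_le_1 N HN). pose proof (Rabs_pos Cs).
  eapply Rle_trans.
  { apply (grid_walk_bound n N Omr (fun y => v y - u y) (Rabs Cs * hN N ^ 2)); auto.
    - pose proof (pow_le (hN N) 2 ltac:(lra)). nra.
    - intros z Hz. apply (dplus_le_norm1h n N Omr _ Cs z 0); auto.
    - intros z Hz Hz0. rewrite Hedge by assumption. ring. }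
  replace (INR (S N) * (Rabs Cs * hN N ^ 2 * hN N))
    with (Rabs Cs * (INR (S N) * hN N) * (hN N * hN N)) by ring.
  rewrite S_INR_hN by exact HN.
  assert ((1 + hN N) * (hN N * hN N) <= 2 * hN N) by nra.
  replace (2 * Rabs Cs * hN N) with (Rabs Cs * (2 * hN N)) by ring.
  rewrite Rmult_assoc. apply Rmult_le_compat_l; lra.
Qed.

Lemma hN_lt_exists c : 0 < c -> exists N, (1 <= N)%nat /\ hN N < c.
Proof.
  intros Hc. destruct (archimed (/ c)) as [Hup _].
  pose proof (Rinv_0_lt_compat c Hc).
  assert (Hz : (0 <= up (/ c))%Z) by (apply le_IZR; lra).
  exists (S (Z.to_nat (up (/ c)))). split; [lia|].
  unfold hN. rewrite S_INR, INR_IZR_INZ, Z2Nat.id by exact Hz.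
  rewrite <- (Rinv_inv c) at 2. apply Rinv_lt_contravar; nra.
Qed.

Lemma grid_round n N x : (1 <= N)%nat -> canon n x ->
  exists y, on_grid n N y /\ forall i, (i < n)%nat -> Rabs (y i - x i) <= hN N.
Proof.
  intros HN Hx. pose proof (one_le_INR N HN).
  set (y := fun i => if (i <? n)%nat then IZR (up (x i * INR N)) * hN N else 0).
  exists y. split; [split|].
  - intros i Hi. unfold y. destruct (Nat.ltb_spec i n); [lia|reflexivity].
  - intros i Hi. exists (up (x i * INR N)). unfold y. destruct (Nat.ltb_spec i n); [reflexivity|lia].
  - intros i Hi. unfold y. destruct (Nat.ltb_spec i n); [|lia].
    destruct (archimed (x i * INR N)) as [A B]. unfold hN.
    replace (IZR (up (x i * INR N)) * / INR N - x i)
      with ((IZR (up (x i * INR N)) - x i * INR N) * / INR N) by (field; lra).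
    pose proof (Rinv_0_lt_compat (INR N) ltac:(lra)).
    rewrite Rabs_right by (apply Rle_ge, Rmult_le_pos; lra).
    rewrite <- (Rmult_1_l (/ INR N)) at 2. apply Rmult_le_compat_r; lra.
Qed.

Lemma grid_point_near n x d : 0 < d -> canon n x ->
  exists N y, (1 <= N)%nat /\ hN N <= d /\ on_grid n N y /\ distn n y x <= d.
Proof.
  intros Hd Hx. pose proof (pos_INR n).
  destruct (hN_lt_exists (d / (INR n + 1))) as [N [HN HhN]]; [apply Rdiv_lt_0_compat; lra|].
  pose proof (hN_pos N HN).
  assert (Hh : (INR n + 1) * hN N <= d).
  { apply Rlt_le. apply (Rmult_lt_compat_l (INR n + 1)) in HhN; [|lra].
    unfold Rdiv in HhN. rewrite <- Rmult_assoc, (Rmult_comm _ d), Rmult_assoc, Rinv_r, Rmult_1_r in HhN;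
      lra. }
  destruct (grid_round n N x HN Hx) as [y [Hg Hyx]].
  rewrite Rmult_plus_distr_r, Rmult_1_l in Hh.
  assert (0 <= INR n * hN N) by (apply Rmult_le_pos; lra).
  exists N, y. split; [exact HN|split; [lra|split; [exact Hg|]]].
  eapply Rle_trans; [apply (distn_le_coords n y x (hN N)); [lra|exact Hyx]|]. lra.
Qed.

Lemma Omega_OmegaBar n x : Omega n x -> OmegaBar n x.
Proof. intros [H1 H2]. split; [exact H1|]. intros i Hi. specialize (H2 i Hi). lra. Qed.

Section HalfRelaxedLimits.
Variables (n : nat) (f g u : pt -> R) (Omr : pt -> Prop) (Cs : R) (U : nat -> pt -> R).
Hypothesis Hn : (1 <= n)%nat.
Hypothesis Hu : cont_on n (OmegaBar n) u.
Hypothesis HO : forall z, Omr z -> Omega n z.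
Hypothesis Hsol : exists h0, 0 < h0 /\ forall N, (1 <= N)%nat -> hN N < h0 ->
  hybrid_sol n f g u Omr Cs N (U N).
Variables (x : pt) (rho : R).
Hypothesis Hx : Omr x.
Hypothesis Hrho : 0 < rho.
Hypothesis Hball : forall y, ball n x rho y -> Omr y.

Lemma hybrid_sol_unif eps : 0 < eps -> exists d0, 0 < d0 /\ d0 < rho /\
  forall N y, (1 <= N)%nat -> hN N <= d0 -> OmegaH0 n N y -> distn n y x <= d0 ->
    Rabs (U N y - u x) < eps.
Proof.
  intros He. destruct Hsol as [h0 [Hh0 Hsol']].
  destruct (Hu x (Omega_OmegaBar n x (HO x Hx)) (eps / 2) ltac:(lra)) as [du [Hdu Hcont]].
  pose proof (Rabs_pos Cs).
  set (c := eps / (4 * (Rabs Cs + 1))).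
  assert (Hc : 0 < c) by (apply Rdiv_lt_0_compat; lra).
  assert (Hc4 : 4 * (Rabs Cs + 1) * c = eps) by (unfold c; field; lra).
  set (d0 := Rmin (Rmin (rho / 2) (du / 2)) (Rmin (h0 / 2) c)).
  assert (Hd : d0 <= rho / 2 /\ d0 <= du / 2 /\ d0 <= h0 / 2 /\ d0 <= c).
  { unfold d0. repeat split.
    - eapply Rle_trans; apply Rmin_l.
    - eapply Rle_trans; [apply Rmin_l|apply Rmin_r].
    - eapply Rle_trans; [apply Rmin_r|apply Rmin_l].
    - eapply Rle_trans; apply Rmin_r. }
  assert (Hd0 : 0 < d0) by (unfold d0; repeat apply Rmin_pos; lra).
  exists d0. split; [exact Hd0|split; [lra|]].
  intros N y HN HhN [HyO Hyg] Hdy.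
  assert (Hyr : OmegaHr n N Omr y).
  { split; [split|exact Hyg].
    - apply HO, Hball. split; [apply HyO|]. rewrite distn_sym. lra.
    - intros e0 He0. exists y. split; [apply Hball; split; [apply HyO|rewrite distn_sym; lra]|].
      now rewrite distn_refl. }
  pose proof (hybrid_sol_grid_err n f g u Omr Cs N (U N) Hn HN HO (Hsol' N HN ltac:(lra)) y Hyr).
  assert (Rabs (u y - u x) < eps / 2)
    by (apply Hcont; [now apply Omega_OmegaBar|rewrite distn_sym; lra]).
  assert (2 * Rabs Cs * hN N < eps / 2) by nra.
  replace (U N y - u x) with ((U N y - u y) + (u y - u x)) by ring.
  eapply Rle_lt_trans; [apply Rabs_triang|lra].
Qed.

Lemma hr_set_near d : 0 < d -> forall eps, 0 < eps ->
  exists r, hr_set n U x d (ER_fin r) /\ Rabs (r - u x) < eps.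
Proof.
  intros Hd eps He. destruct (hybrid_sol_unif eps He) as [d0 [Hd0 [Hd0r Hclose]]].
  destruct (grid_point_near n x (Rmin d d0)) as [N [y [HN [HhN [Hg Hdy]]]]];
    [now apply Rmin_pos|apply HO, Hx|].
  pose proof (Rmin_l d d0). pose proof (Rmin_r d d0).
  assert (Hy : OmegaH0 n N y).
  { split; [|exact Hg]. apply HO, Hball. split; [apply Hg|]. rewrite distn_sym. lra. }
  exists (U N y). split.
  - exists N, y. split; [exact HN|split; [lra|split; [exact Hy|split; [lra|reflexivity]]]].
  - apply Hclose; auto; lra.
Qed.

Lemma hr_set_unif eps : 0 < eps -> exists d0, 0 < d0 /\ forall d, 0 < d -> d <= d0 ->
  forall r, hr_set n U x d (ER_fin r) -> Rabs (r - u x) < eps.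
Proof.
  intros He. destruct (hybrid_sol_unif eps He) as [d0 [Hd0 [_ Hclose]]].
  exists d0. split; [exact Hd0|].
  intros d Hd Hdd r [N [y [HN [Hh [Hy [Hdy E]]]]]]. injection E as ->.
  apply Hclose; auto; lra.
Qed.

Lemma hr_set_fin d s : hr_set n U x d s -> exists r, s = ER_fin r.
Proof. intros [N [y [_ [_ [_ [_ E]]]]]]. eauto. Qed.

Lemma ustar_eq_u : ustar_low n U x = ER_fin (u x) /\ ustar_up n U x = ER_fin (u x).
Proof.
  split; [apply ER_liminf_eq|apply ER_limsup_eq];
    first [exact hr_set_fin|exact hr_set_near|exact hr_set_unif].
Qed.
End HalfRelaxedLimits.

Lemma MVT_from_0 (g g' : R -> R) b : (forall c, Rabs c <= Rabs b -> derivable_pt_lim g c (g' c)) ->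
  exists c, Rabs c <= Rabs b /\ g b - g 0 = g' c * b.
Proof.
  intros H. destruct (Rtotal_order b 0) as [Hb|[Hb|Hb]].
  - destruct (MVT_cor2 g g' b 0 Hb) as [c [Hc1 Hc2]].
    { intros c Hc. apply H. rewrite !Rabs_left1 by lra. lra. }
    exists c. split; [rewrite !Rabs_left1 by lra; lra|lra].
  - subst. exists 0. split; [rewrite Rabs_R0; lra|ring].
  - destruct (MVT_cor2 g g' 0 b Hb) as [c [Hc1 Hc2]].
    { intros c Hc. apply H. rewrite !Rabs_right by lra. lra. }
    exists c. split; [rewrite !Rabs_right by lra; lra|lra].
Qed.

Lemma derivable_pt_lim_shift g c l :
  derivable_pt_lim (fun s => g (c + s)) 0 l -> derivable_pt_lim g c l.
Proof.
  intros H eps He. destruct (H eps He) as [d Hd]. exists d. intros h0 Hh0 Hh0'.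
  specialize (Hd h0 Hh0 Hh0'). now rewrite Rplus_0_l, Rplus_0_r in Hd.
Qed.

Lemma derivable_pt_lim_sumn_scal (F : nat -> R -> R) (l : nat -> R) (v : pt) k :
  (forall j, (j < k)%nat -> derivable_pt_lim (F j) 0 (l j)) ->
  derivable_pt_lim (fun t => sumn k (fun j => v j * F j t)) 0 (sumn k (fun j => v j * l j)).
Proof.
  induction k; intros H; simpl; [apply derivable_pt_lim_const|].
  apply (derivable_pt_lim_plus (fun t => sumn k (fun j => v j * F j t)) (fun t => v k * F k t)).
  - apply IHk. auto.
  - apply (derivable_pt_lim_scal (F k)). apply H. lia.
Qed.

Definition cube_in n (Dom : pt -> Prop) y g := forall q, canon n q ->
  (forall i, (i < n)%nat -> Rabs (q i) <= g) -> Dom (vadd y q).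

(* Moving from [y] to [y + t v] one coordinate at a time reduces the chain rule
   to the one-variable mean value theorem: [partial_path v k t s] has moved the
   coordinates [< k] by [t v] and is at offset [s] in coordinate [k]. *)
Definition partial_path (v : pt) (k : nat) (t s : R) : pt :=
  fun i => (if (i <? k)%nat then t * v i else 0) + s * e k i.

Lemma partial_path_canon n v k t s : canon n v -> (k < n)%nat -> canon n (partial_path v k t s).
Proof.
  intros Hv Hk i Hi. unfold partial_path.
  destruct (Nat.ltb_spec i k); [lia|]. rewrite e_neq by lia. ring.
Qed.

Lemma partial_path_bound n v k t s V : (forall i, (i < n)%nat -> Rabs (v i) <= V) ->
  forall i, (i < n)%nat -> Rabs (partial_path v k t s i) <= Rabs t * V + Rabs s.
Proof.
  intros HV i Hi. unfold partial_path. eapply Rle_trans; [apply Rabs_triang|].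
  pose proof (Rabs_pos t). pose proof (Rabs_pos s). pose proof (HV i Hi). pose proof (Rabs_pos (v i)).
  apply Rplus_le_compat.
  - destruct (Nat.ltb_spec i k); [rewrite Rabs_mult|rewrite Rabs_R0]; nra.
  - rewrite Rabs_mult. unfold e. destruct (Nat.eqb i k); [rewrite Rabs_R1|rewrite Rabs_R0]; lra.
Qed.

Lemma partial_path_next v k t : partial_path v k t (t * v k) = partial_path v (S k) t 0.
Proof.
  apply functional_extensionality. intros i. unfold partial_path.
  destruct (Nat.ltb_spec i k); destruct (Nat.ltb_spec i (S k)); try lia.
  - rewrite !e_neq by lia. ring.
  - replace i with k by lia. rewrite !e_diag. ring.
  - rewrite !e_neq by lia. ring.
Qed.

Lemma partial_path_start v t : partial_path v 0 t 0 = fun _ => 0.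
Proof.
  apply functional_extensionality. intros i. unfold partial_path.
  destruct (Nat.ltb_spec i 0); [lia|ring].
Qed.

Lemma partial_path_end n v t : canon n v -> partial_path v n t 0 = vscale t v.
Proof.
  intros Hv. apply functional_extensionality. intros i. unfold partial_path, vscale.
  destruct (Nat.ltb_spec i n); [ring|]. rewrite Hv by lia. ring.
Qed.

Lemma partial_path_shift y v k t c s :
  vadd y (partial_path v k t (c + s)) = vadd (vadd y (partial_path v k t c)) (vscale s (e k)).
Proof. apply functional_extensionality. intros i. unfold vadd, partial_path, vscale. ring. Qed.

Section ChainRule.
Variables (n : nat) (Dom : pt -> Prop) (F : pt -> R) (P : nat -> pt -> R) (y v : pt) (gam V : R).
Hypothesis Hgam : 0 < gam.
Hypothesis Hv : canon n v.
Hypothesis HV : 0 < V.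
Hypothesis HVb : forall i, (i < n)%nat -> Rabs (v i) <= V.
Hypothesis Hcube : cube_in n Dom y gam.
Hypothesis HPc : forall j, (j < n)%nat -> cont_on n Dom (P j).
Hypothesis HF : forall z, Dom z -> forall j, (j < n)%nat ->
  derivable_pt_lim (fun s => F (vadd z (vscale s (e j)))) 0 (P j z).

Lemma partial_path_in k t c : (k < n)%nat -> Rabs t * (2 * V) <= gam -> Rabs c <= Rabs t * V ->
  Dom (vadd y (partial_path v k t c)) /\ distn n y (vadd y (partial_path v k t c)) <= INR n * (Rabs t * (2 * V)).
Proof.
  intros Hk Ht Hc. pose proof (Rabs_pos t).
  assert (Hb : forall i, (i < n)%nat -> Rabs (partial_path v k t c i) <= Rabs t * (2 * V)).
  { intros i Hi. eapply Rle_trans; [apply (partial_path_bound n v k t c V HVb i Hi)|lra]. }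
  split.
  - apply Hcube; [now apply partial_path_canon|]. intros i Hi. specialize (Hb i Hi). lra.
  - apply distn_vadd_le; [nra|exact Hb].
Qed.

Lemma partial_path_mvt k t : (k < n)%nat -> Rabs t * (2 * V) <= gam ->
  exists c, Dom (vadd y (partial_path v k t c)) /\
    distn n y (vadd y (partial_path v k t c)) <= INR n * (Rabs t * (2 * V)) /\
    F (vadd y (partial_path v k t (t * v k))) - F (vadd y (partial_path v k t 0))
      = P k (vadd y (partial_path v k t c)) * (t * v k).
Proof.
  intros Hk Ht.
  assert (Hvk : Rabs (t * v k) <= Rabs t * V)
    by (rewrite Rabs_mult; apply Rmult_le_compat_l; [apply Rabs_pos|auto]).
  destruct (MVT_from_0 (fun s => F (vadd y (partial_path v k t s)))
                       (fun s => P k (vadd y (partial_path v k t s))) (t * v k))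
    as [c [Hc Hmvt]].
  - intros c Hc eps He.
    destruct (HF _ (proj1 (partial_path_in k t c Hk Ht (Rle_trans _ _ _ Hc Hvk))) k Hk eps He)
      as [dl Hdl].
    exists dl. intros h0 Hh0 Hh0'. specialize (Hdl h0 Hh0 Hh0').
    rewrite partial_path_shift. rewrite vadd_scale0, Rplus_0_l in Hdl. exact Hdl.
  - exists c. destruct (partial_path_in k t c Hk Ht (Rle_trans _ _ _ Hc Hvk)) as [Hin Hdist].
    repeat split; assumption.
Qed.

Lemma partial_path_step k : (k < n)%nat -> forall eps, 0 < eps -> exists d, 0 < d /\
  forall t, t <> 0 -> Rabs t < d ->
  Rabs ((F (vadd y (partial_path v k t (t * v k))) - F (vadd y (partial_path v k t 0))) / t
        - v k * P k y) <= eps.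
Proof.
  intros Hk eps He. pose proof (pos_INR n).
  assert (Hy : Dom y) by (rewrite <- (vadd_zero y); apply Hcube; [apply canon_zero|];
                          intros; rewrite Rabs_R0; lra).
  destruct (HPc k Hk y Hy (eps / V) ltac:(apply Rdiv_lt_0_compat; lra)) as [dc [Hdc Hcont]].
  destruct (small_mult_exists (2 * V) gam ltac:(lra) Hgam) as [d1 [Hd1 Ht1]].
  destruct (small_mult_exists (INR n * (2 * V)) dc ltac:(nra) Hdc) as [d2 [Hd2 Ht2]].
  exists (Rmin d1 d2). split; [now apply Rmin_pos|]. intros t Ht Htd.
  specialize (Ht1 t (Rlt_le_trans _ _ _ Htd (Rmin_l _ _))).
  specialize (Ht2 t (Rlt_le_trans _ _ _ Htd (Rmin_r _ _))).
  destruct (partial_path_mvt k t Hk ltac:(lra)) as [c [Hin [Hdist Hmvt]]].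
  rewrite Hmvt.
  replace (P k (vadd y (partial_path v k t c)) * (t * v k) / t - v k * P k y)
    with (v k * (P k (vadd y (partial_path v k t c)) - P k y)) by (field; exact Ht).
  rewrite Rabs_mult.
  assert (Hcl : Rabs (P k (vadd y (partial_path v k t c)) - P k y) < eps / V)
    by (apply Hcont; [exact Hin|nra]).
  apply Rle_trans with (V * (eps / V)); [apply Rmult_le_compat; auto using Rabs_pos; lra|].
  right. field. lra.
Qed.

Lemma partial_path_telescope m : (m <= n)%nat -> forall eps, 0 < eps -> exists d, 0 < d /\
  forall t, t <> 0 -> Rabs t < d ->
  Rabs ((F (vadd y (partial_path v m t 0)) - F y) / t - sumn m (fun j => v j * P j y)) <= eps.
Proof.
  induction m; intros Hm eps He.
  - exists 1. split; [lra|]. intros t Ht _. rewrite partial_path_start, vadd_zero. simpl.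
    replace ((F y - F y) / t - 0) with 0 by (field; auto). rewrite Rabs_R0. lra.
  - destruct (IHm ltac:(lia) (eps / 2) ltac:(lra)) as [d1 [Hd1 H1]].
    destruct (partial_path_step m ltac:(lia) (eps / 2) ltac:(lra)) as [d2 [Hd2 H2]].
    exists (Rmin d1 d2). split; [now apply Rmin_pos|]. intros t Ht Htd.
    specialize (H1 t Ht (Rlt_le_trans _ _ _ Htd (Rmin_l _ _))).
    specialize (H2 t Ht (Rlt_le_trans _ _ _ Htd (Rmin_r _ _))).
    rewrite partial_path_next in H2. simpl sumn.
    match goal with |- Rabs ?a <= _ => replace a with
      (((F (vadd y (partial_path v m t 0)) - F y) / t - sumn m (fun j => v j * P j y)) +
       ((F (vadd y (partial_path v (S m) t 0)) - F (vadd y (partial_path v m t 0))) / t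
        - v m * P m y)) by (field; auto) end.
    eapply Rle_trans; [apply Rabs_triang|lra].
Qed.
End ChainRule.

Lemma derivable_pt_lim_dir n Dom F P y v gam : 0 < gam -> canon n v -> cube_in n Dom y gam ->
  (forall j, (j < n)%nat -> cont_on n Dom (P j)) ->
  (forall z, Dom z -> forall j, (j < n)%nat ->
     derivable_pt_lim (fun s => F (vadd z (vscale s (e j)))) 0 (P j z)) ->
  derivable_pt_lim (fun t => F (vadd y (vscale t v))) 0 (sumn n (fun j => v j * P j y)).
Proof.
  intros Hgam Hv Hcube HPc HF eps He.
  destruct (coord_bound_exists n v) as [V [HV HVb]].
  destruct (partial_path_telescope n Dom F P y v gam V Hgam Hv HV HVb Hcube HPc HF n (le_n n)
              (eps / 2) ltac:(lra)) as [d [Hd H]].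
  exists (mkposreal d Hd). intros h0 Hh0 Hh0'. simpl in Hh0'.
  specialize (H h0 Hh0 Hh0'). rewrite partial_path_end in H by exact Hv.
  rewrite Rplus_0_l, vadd_scale0. lra.
Qed.

(* [G t + G (-t) - 2 G 0 >= 0] near [0] forces [G''(0) >= 0]: otherwise [G' t - G' (-t) < 0]
   for small [t > 0], and the mean value theorem applied to [t |-> G t + G (-t)] contradicts it. *)
Lemma deriv2_nonneg_of_second_diff (G G' : R -> R) del Q : 0 < del ->
  (forall t, Rabs t < del -> derivable_pt_lim G t (G' t)) -> derivable_pt_lim G' 0 Q ->
  (forall t, Rabs t < del -> 0 <= G t + G (- t) - 2 * G 0) -> 0 <= Q.
Proof.
  intros Hdel HG HG' HH. apply Rnot_lt_le. intros HQ.
  destruct (HG' (- Q / 2) ltac:(lra)) as [d2 Hd2].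
  set (m := Rmin del d2).
  assert (Hm : 0 < m) by (apply Rmin_pos; [lra|apply cond_pos]).
  assert (Hm1 : m <= del) by apply Rmin_l. assert (Hm2 : m <= d2) by apply Rmin_r.
  assert (Hodd : forall s, 0 < s < m -> G' s - G' (- s) < 0).
  { intros s Hs.
    assert (A := Hd2 s ltac:(lra) ltac:(rewrite Rabs_right; lra)).
    assert (B := Hd2 (- s) ltac:(lra) ltac:(rewrite Rabs_Ropp, Rabs_right; lra)).
    rewrite Rplus_0_l in A, B. apply Rabs_def2 in A as [A _]. apply Rabs_def2 in B as [B _].
    assert (A' : G' s - G' 0 < Q / 2 * s).
    { assert (A1 : (G' s - G' 0) / s < Q / 2) by lra.
      apply (Rmult_lt_compat_r s) in A1; [|lra].
      replace ((G' s - G' 0) / s * s) with (G' s - G' 0) in A1 by (field; lra). exact A1. }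
    assert (B' : G' (- s) - G' 0 > Q / 2 * (- s)).
    { assert (B1 : (G' (- s) - G' 0) / - s < Q / 2) by lra.
      apply (Rmult_lt_compat_r s) in B1; [|lra].
      replace ((G' (- s) - G' 0) / - s * s) with (- (G' (- s) - G' 0)) in B1 by (field; lra). lra. }
    nra. }
  set (t := m / 2).
  destruct (MVT_cor2 (fun s => G s + G (- s)) (fun s => G' s - G' (- s)) 0 t ltac:(unfold t; lra))
    as [c [Hc1 Hc2]].
  { intros c Hc.
    assert (D1 := HG c ltac:(rewrite Rabs_right; unfold t in *; lra)).
    assert (D2 := HG (- c) ltac:(rewrite Rabs_Ropp, Rabs_right; unfold t in *; lra)).
    assert (Dop : derivable_pt_lim (fun s => - s) c (-1)).
    { apply (derivable_pt_lim_opp id). apply derivable_pt_lim_id. }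
    pose proof (derivable_pt_lim_comp (fun s => - s) G c (-1) (G' (- c)) Dop D2) as D3.
    replace (G' c - G' (- c)) with (G' c + G' (- c) * -1) by ring.
    exact (derivable_pt_lim_plus _ _ _ _ _ D1 D3). }
  specialize (Hodd c ltac:(unfold t in *; lra)).
  specialize (HH t ltac:(rewrite Rabs_right; unfold t; lra)).
  rewrite Ropp_0 in Hc1. unfold t in *. nra.
Qed.

Lemma C2_second_dir_deriv_nonneg n Dom phi D1 D2 x v gam del :
  0 < gam -> 0 < del -> canon n v -> C2_data n Dom phi D1 D2 ->
  (forall t, Rabs t < del -> cube_in n Dom (vadd x (vscale t v)) gam) ->
  (forall t, Rabs t < del ->
     0 <= phi (vadd x (vscale t v)) + phi (vadd x (vscale (- t) v)) - 2 * phi x) ->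
  0 <= sumn n (fun j => v j * sumn n (fun i => v i * D2 j i x)).
Proof.
  intros Hgam Hdel Hv [_ [HD1c [HD2c HDer]]] Hcube Hdiff.
  apply (deriv2_nonneg_of_second_diff (fun t => phi (vadd x (vscale t v)))
           (fun t => sumn n (fun j => v j * D1 j (vadd x (vscale t v)))) del); [exact Hdel| | |].
  - intros t Ht. apply derivable_pt_lim_shift.
    replace (fun s => phi (vadd x (vscale (t + s) v)))
      with (fun s => phi (vadd (vadd x (vscale t v)) (vscale s v)))
      by (apply functional_extensionality; intros s; f_equal;
          apply functional_extensionality; intros i; unfold vadd, vscale; ring).
    apply (derivable_pt_lim_dir n Dom phi D1 _ v gam); auto.
    intros z Hz j Hj. apply (HDer z Hz j j Hj Hj).
  - apply (derivable_pt_lim_sumn_scal (fun j t => D1 j (vadd x (vscale t v)))).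
    intros j Hj. apply (derivable_pt_lim_dir n Dom (D1 j) (D2 j) x v gam); auto.
    + pose proof (Hcube 0 ltac:(rewrite Rabs_R0; lra)) as H0. now rewrite vadd_scale0 in H0.
    + intros z Hz i Hi. apply (HDer z Hz j i Hj Hi).
  - intros t Ht. rewrite vadd_scale0. now apply Hdiff.
Qed.

Lemma line_cube_in_ball n x v m : canon n x -> canon n v -> 0 < m ->
  exists gam del, 0 < gam /\ 0 < del /\ forall t q, Rabs t < del -> canon n q ->
    (forall i, (i < n)%nat -> Rabs (q i) <= gam) -> ball n x m (vadd (vadd x (vscale t v)) q).
Proof.
  intros Hx Hv Hm. destruct (coord_bound_exists n v) as [V [HV HVb]].
  pose proof (pos_INR n).
  set (gam := m / (2 * (INR n + 1))).
  assert (Hgam : 0 < gam) by (apply Rdiv_lt_0_compat; lra).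
  assert (Hgam_m : (INR n + 1) * (2 * gam) = m) by (unfold gam; field; lra).
  destruct (small_mult_exists V gam ltac:(lra) Hgam) as [del [Hdel Hsmall]].
  exists gam, del. split; [exact Hgam|split; [exact Hdel|]].
  intros t q Ht Hq Hqb. specialize (Hsmall t Ht). pose proof (Rabs_pos t).
  rewrite vadd_assoc. apply (ball_vadd n x _ (Rabs t * V + gam)); [exact Hx| |nra| |nra].
  - intros i Hi. unfold vadd, vscale. rewrite Hv, Hq by exact Hi. ring.
  - intros i Hi. unfold vadd, vscale. eapply Rle_trans; [apply Rabs_triang|].
    rewrite Rabs_mult. pose proof (HVb i Hi). pose proof (Hqb i Hi). nra.
Qed.

Lemma eigvec_quad_form n (A : nat -> nat -> R) v l :
  (forall i, (i < n)%nat -> sumn n (fun j => A i j * v j) = l * v i) ->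
  sumn n (fun j => v j * sumn n (fun i => v i * A j i)) = l * dot n v v.
Proof.
  intros Heig. unfold dot. rewrite <- sumn_scal. apply sumn_ext. intros j Hj.
  rewrite (sumn_ext n (fun i => v i * A j i) (fun i => A j i * v i)) by (intros; ring).
  rewrite (Heig j Hj). ring.
Qed.

Lemma dot_self_pos n v i : (i < n)%nat -> v i <> 0 -> 0 < dot n v v.
Proof.
  intros Hi Hvi. pose proof (sumn_le_term n (fun j => v j * v j) i ltac:(intros; nra) Hi).
  pose proof (Rsqr_pos_lt (v i) Hvi). unfold Rsqr, dot in *. lra.
Qed.

Lemma eig_nonneg_of_touch_convex n u (Omr : pt -> Prop) x r phi D1 D2 rho l :
  canon n x -> convex_fun_on n (Omega n) u -> (forall y, Omr y -> Omega n y) ->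
  0 < rho -> (forall y, ball n x rho y -> Omr y) -> 0 < r -> C2_data n (ball n x r) phi D1 D2 ->
  (forall y, ball n x r y -> Omr y -> u y <= phi y + (u x - phi x)) ->
  is_eig n (fun i j => D2 i j x) l -> 0 <= l.
Proof.
  intros Hx Hcv HO Hrho Hball Hr HC Htouch [v [Hv [[i0 [Hi0 Hvi0]] Heig]]].
  destruct (line_cube_in_ball n x v (Rmin r rho) Hx Hv ltac:(now apply Rmin_pos))
    as [gam [del [Hgam [Hdel Hnear]]]].
  assert (Hin : forall z, ball n x (Rmin r rho) z -> ball n x r z /\ Omr z)
    by (intros z Hz; split; [|apply Hball]; eapply ball_le; eauto; [apply Rmin_l|apply Rmin_r]).
  assert (Hline : forall t, Rabs t < del ->
            ball n x r (vadd x (vscale t v)) /\ Omr (vadd x (vscale t v))).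
  { intros t Ht. apply Hin. rewrite <- (vadd_zero (vadd x (vscale t v))).
    apply Hnear; [exact Ht|apply canon_zero|intros; rewrite Rabs_R0; lra]. }
  pose proof (C2_second_dir_deriv_nonneg n (ball n x r) phi D1 D2 x v gam del Hgam Hdel Hv HC) as HQ.
  rewrite (eigvec_quad_form n (fun i j => D2 i j x) v l Heig) in HQ.
  pose proof (dot_self_pos n v i0 Hi0 Hvi0).
  enough (0 <= l * dot n v v) by nra. apply HQ.
  - intros t Ht q Hq Hqb. now apply Hin, Hnear.
  - intros t Ht.
    destruct (Hline t Ht) as [B1 O1].
    destruct (Hline (- t) ltac:(rewrite Rabs_Ropp; exact Ht)) as [B2 O2].
    pose proof (Htouch _ B1 O1). pose proof (Htouch _ B2 O2).
    pose proof (Hcv _ _ (1 / 2) (HO _ O1) (HO _ O2) ltac:(lra)) as Hmid.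
    replace (vadd (vscale (1 / 2) (vadd x (vscale t v))) (vscale (1 - 1 / 2) (vadd x (vscale (- t) v))))
      with x in Hmid by (apply functional_extensionality; intros i; unfold vadd, vscale; field).
    lra.
Qed.

Lemma cont_on_sub n Dom Dom' F : (forall y, Dom' y -> Dom y) -> cont_on n Dom F -> cont_on n Dom' F.
Proof.
  intros Hs HF y Hy eps He. destruct (HF y (Hs y Hy) eps He) as [d [Hd Hclose]].
  exists d. split; [exact Hd|]. intros z Hz. now apply Hclose, Hs.
Qed.

Lemma C2_hess_sub n Dom Dom' phi D2 : (forall y, Dom' y -> Dom y) ->
  C2_hess n Dom phi D2 -> C2_hess n Dom' phi D2.
Proof.
  intros Hs [D1 [H1 [H2 [H3 H4]]]]. exists D1.
  split; [|split; [|split]]; eauto using cont_on_sub.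
Qed.

Section ViscosityNearRegular.
Variables (n : nat) (u : pt -> R) (Omr : pt -> Prop) (w : pt -> ER) (x : pt).
Hypothesis Hop : open_set_n n Omr.
Hypothesis HO : forall y, Omr y -> Omega n y.
Hypothesis Hw : forall y, Omr y -> w y = ER_fin (u y).
Hypothesis Hx : Omr x.

Lemma visc_MA_at_of_eq f : visc_MA n f u -> visc_MA_at n f w x.
Proof.
  intros Hv a r phi D2 Hwx Hr HC Hcv.
  rewrite Hw in Hwx by exact Hx. injection Hwx as <-.
  destruct (Hop x Hx) as [rho [Hrho Hball]].
  set (r' := Rmin r rho). assert (Hr' : 0 < r') by (apply Rmin_pos; auto).
  assert (Hr'r : forall y, ball n x r' y -> ball n x r y) by (intros; eapply ball_le; [apply Rmin_l|eauto]).
  assert (Hr'rho : forall y, ball n x r' y -> Omr y) by (intros; apply Hball; eapply ball_le; [apply Rmin_r|eauto]).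
  destruct (Hv x r' phi D2 (HO x Hx) Hr') as [Hsub Hsup].
  - exact (C2_hess_sub n _ _ phi D2 Hr'r HC).
  - intros y z t Hy Hz Ht. apply Hcv; auto.
  - split; intros Ht; [apply Hsub|apply Hsup]; intros y Hy HyO;
      specialize (Ht y (Hr'r y Hy) HyO); rewrite Hw in Ht by auto; simpl in Ht; lra.
Qed.

Lemma visc_lam_at_of_eq : convex_fun_on n (Omega n) u -> visc_lam_at n w x.
Proof.
  intros Hcv a r phi D2 Hwx Hr [D1 HC].
  rewrite Hw in Hwx by exact Hx. injection Hwx as <-.
  destruct (Hop x Hx) as [rho [Hrho Hball]].
  split; [|intros _ l _; apply Rmax_r].
  intros Ht l [Hl _]. apply Rmax_lub; [|lra].
  enough (0 <= l) by lra.
  apply (eig_nonneg_of_touch_convex n u Omr x r phi D1 D2 rho l); auto.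
  - apply (HO x Hx).
  - intros y Hy HyO. specialize (Ht y Hy (HO y HyO)). rewrite Hw in Ht by auto. simpl in Ht. lra.
Qed.
End ViscosityNearRegular.

Theorem mainTheorem5 (n : nat) (f g u : pt -> R) (Omr : pt -> Prop) (Cs : R)
  (U : nat -> pt -> R) :
  (2 <= n)%nat ->
  cont_on n (OmegaBar n) f -> (forall x, OmegaBar n x -> 0 < f x) ->
  cont_on n (Bdry n) g ->
  (exists gt, cont_on n (OmegaBar n) gt /\ convex_fun_on n (OmegaBar n) gt /\
              forall x, Bdry n x -> gt x = g x) ->
  cont_on n (OmegaBar n) u -> convex_fun_on n (Omega n) u ->
  (forall x, Bdry n x -> u x = g x) -> visc_MA n f u ->
  open_set_n n Omr -> bounded_set n Omr -> convex_set n Omr ->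
  (forall x, Omr x -> Omega n x) -> (forall x, Omr x -> regular n u x) ->
  (exists h0, 0 < h0 /\ forall N, (1 <= N)%nat -> hN N < h0 ->
                hybrid_sol n f g u Omr Cs N (U N)) ->
  forall x, Omr x ->
    ustar_low n U x = ER_fin (u x) /\ ustar_up n U x = ER_fin (u x) /\
    visc_MA_at n f (ustar_low n U) x /\ visc_MA_at n f (ustar_up n U) x /\
    visc_lam_at n (ustar_low n U) x /\ visc_lam_at n (ustar_up n U) x.
Proof.
  (* The data f, g and the regularity of Omega_r only serve the existence of u^h,
     which is assumed here. *)
  intros Hn _ _ _ _ Hu Hcv _ Hvisc Hop _ _ HO _ Hsol x Hx.
  assert (Hlim : forall y, Omr y -> ustar_low n U y = ER_fin (u y) /\ ustar_up n U y = ER_fin (u y)).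
  { intros y Hy. destruct (Hop y Hy) as [rho [Hrho Hball]].
    apply (ustar_eq_u n f g u Omr Cs U ltac:(lia) Hu HO Hsol y rho Hy Hrho Hball). }
  assert (Hlow : forall y, Omr y -> ustar_low n U y = ER_fin (u y)) by apply Hlim.
  assert (Hup : forall y, Omr y -> ustar_up n U y = ER_fin (u y)) by apply Hlim.
  split; [now apply Hlow|split; [now apply Hup|]].
  split; [now apply (visc_MA_at_of_eq n u Omr)|split; [now apply (visc_MA_at_of_eq n u Omr)|]].
  split; now apply (visc_lam_at_of_eq n u Omr).
Qed.
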